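(* Let $G=(\Gamma,s)$ be a connected rooted graph and $p\in\mathrm{PF}(G)$. Define $V_M(p)=\{v\in\tilde V: p(v)\le\mathrm{mult}(vs)\}$ and, for $v\in\tilde V$, $p^{v+}=p+\sum_{w\in\tilde V\setminus\{v\}}\mathrm{mult}(ws)\mathbf 1_w$. Then $p$ is prime if and only if $p^{v+}\in\mathrm{PF}(G)$ for every $v\in V_M(p)$.
   Context: $\mathbb{N}=\{1,2,\dots\}$. A rooted graph $G=(\Gamma,s)$ is a finite undirected multigraph without loops with a distinguished vertex $s$ (the sink); $V$ is its vertex set, $\tilde V=V\setminus\{s\}$. $\mathrm{mult}(vw)$ is the number of edges between $v,w$; $\deg^A(v)=\sum_{w\in A}\mathrm{mult}(vw)$ for $A\subseteq V$. $\mathbf 1_w$ is the indicator function of $w$. A $G$-parking function is $p:\tilde V\to\mathbb{N}$ such that for every nonempty $S\subseteq\tilde V$ there is $v\in S$ with $p(v)\le\deg^{V\setminus S}(v)$; $\mathrm{PF}(G)$ is their set (the same definition is used for possibly disconnected rooted graphs). For $A\subseteq\tilde V$, $G^A$ is the induced subgraph on $A\cup\{s\}$ rooted at $s$. For an ordered pair $(A,B)$ of nonempty disjoint sets with $A\cup B=\tilde V$ and $p\in\mathrm{PF}(G)$, $p^A(v)=p(v)$ ($v\in A$) and $p^B(v)=p(v)-\deg^A(v)$ ($v\in B$); $p$ is decomposable w.r.t. $(A,B)$ if $p^A\in\mathrm{PF}(G^A)$ and $p^B\in\mathrm{PF}(G^B)$; $p$ is prime if it is decomposable w.r.t. no such $(A,B)$.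 *)

From mathcomp Require Import all_boot all_order all_algebra.
Set Implicit Arguments. Unset Strict Implicit. Unset Printing Implicit Defensive.
Import Order.TTheory GRing.Theory Num.Theory.

(* A rooted multigraph is given by a finite vertex type V, a symmetric loopless
   multiplicity function mult : V -> V -> nat and a sink s : V.
   Functions on the non-sink vertices are modelled as total functions V -> int
   whose value at s (or outside the relevant vertex set) is ignored. *)

Section Defs.
Variables (V : finType) (mult : V -> V -> nat) (s : V).

Definition deg (A : {set V}) (v : V) : nat := \sum_(w in A) mult v w.

Definition connected_graph : Prop :=
  forall x y : V, connect (fun a b => 0 < mult a b)%N x y.

(* q restricted to A is a parking function of the induced rooted graph G^A
   (vertex set A ∪ {s}, sink s). *)
Definition PF_on (A : {set V}) (q : V -> int) : Prop :=
  (forall v, v \in A -> (0 < q v)%R) /\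
  (forall S : {set V}, S \subset A -> S != set0 ->
     exists2 v, v \in S & (q v <= (deg ((s |: A) :\: S) v)%:Z)%R).

Definition PF (q : V -> int) : Prop := PF_on [set~ s] q.

Definition decomposable (q : V -> int) (A B : {set V}) : Prop :=
  PF_on A q /\ PF_on B (fun v => q v - (deg A v)%:Z)%R.

Definition admissible_pair (A B : {set V}) : Prop :=
  A != set0 /\ B != set0 /\ [disjoint A & B] /\ A :|: B = [set~ s].

Definition prime_pf (q : V -> int) : Prop :=
  PF q /\ forall A B, admissible_pair A B -> ~ decomposable q A B.

Definition VM (q : V -> int) : {set V} :=
  [set v in [set~ s] | (q v <= (mult v s)%:Z)%R].

Definition pplus (q : V -> int) (v : V) : V -> int :=
  fun w => if (w != v) && (w != s) then (q w + (mult w s)%:Z)%R else q w.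

End Defs.

(* If (A, B) decomposes p, the parking condition of p^A at S = A produces a
   vertex v in A ∩ V_M(p), and the parking condition of p^{v+} at S = B then
   contradicts the positivity of p^B.  Conversely, if p^{v+} fails at a set S,
   then v ∉ S and every u in S satisfies p(u) > deg^{Ṽ∖S}(u).  Such overloaded
   sets avoiding v are closed under union; for the largest one M, the pair
   (Ṽ∖M, M) decomposes p, by the maximality of M on the Ṽ∖M side and by the
   parking condition of p on the M side. *)
From mathcomp Require Import all_boot all_order all_algebra.
From mathcomp Require Import zify.
Set Implicit Arguments. Unset Strict Implicit. Unset Printing Implicit Defensive.
Import Order.TTheory GRing.Theory Num.Theory.

Local Open Scope ring_scope.

Section Degree.
Variables (V : finType) (mult : V -> V -> nat).

Lemma deg_setU (A B : {set V}) v : [disjoint A & B] ->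
  deg mult (A :|: B) v = (deg mult A v + deg mult B v)%N.
Proof. by move=> dAB; rewrite /deg -bigU //; apply: eq_bigl => w; rewrite !inE. Qed.

Lemma deg_subset (A B : {set V}) v : A \subset B -> (deg mult A v <= deg mult B v)%N.
Proof.
move=> sAB; apply: (sub_le_big leqnn (fun m n => leq_addr n m)) => w.
exact: (subsetP sAB).
Qed.

Lemma deg_set1 (s v : V) : deg mult [set s] v = mult v s.
Proof. by rewrite /deg big_set1. Qed.

End Degree.

Section Parking.
Variables (V : finType) (mult : V -> V -> nat) (s : V).

Local Notation X := [set~ s].
Local Notation deg := (deg mult).
Local Notation PF_on := (PF_on mult s).
Local Notation PF := (PF mult s).
Local Notation VM := (VM mult s).
Local Notation pplus := (pplus mult s).

Lemma setU1_setC1 : s |: X = setT.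
Proof. exact: setUCr. Qed.

Lemma notin_setC1 (S : {set V}) : S \subset X -> s \notin S.
Proof. by move=> /subsetP sS; apply/negP => /sS; rewrite in_setC1 eqxx. Qed.

Lemma deg_setC (S : {set V}) u :
  s \notin S -> deg (~: S) u = (mult u s + deg (X :\: S) u)%N.
Proof.
move=> sS; have -> : ~: S = [set s] :|: X :\: S.
  by apply/setP => x; rewrite !inE; case: (eqVneq x s) => [->|_] /=; rewrite ?sS ?andbT.
by rewrite deg_setU ?deg_set1 // disjoints1 !inE eqxx andbF.
Qed.

Definition overloaded (q : V -> int) (S : {set V}) : bool :=
  [forall u in S, (deg (X :\: S) u)%:Z < q u].

Lemma overloadedU q (S T : {set V}) : overloaded q S ->
  {in T, forall u, (deg (X :\: (S :|: T)) u)%:Z < q u} -> overloaded q (S :|: T).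
Proof.
move=> /forall_inP ovS ovT; apply/forall_inP => u.
rewrite inE => /orP[uS|]; last exact: ovT.
by apply: le_lt_trans (ovS u uS); rewrite lez_nat deg_subset // setDS // subsetUl.
Qed.

Lemma overloaded_setU q (S T : {set V}) :
  overloaded q S -> overloaded q T -> overloaded q (S :|: T).
Proof.
move=> ovS /forall_inP ovT; apply: overloadedU => // u uT.
by apply: le_lt_trans (ovT u uT); rewrite lez_nat deg_subset // setDS // subsetUr.
Qed.

Lemma PF_on_overloaded p (B : {set V}) : PF p -> B \subset X -> overloaded p B ->
  PF_on B (fun u => p u - (deg (X :\: B) u)%:Z).
Proof.
move=> [_ PFp] sB /forall_inP ovB; split=> [u uB | T sT T0].
  by rewrite subr_gt0 ovB.
have [u uT hu] := PFp T (subset_trans sT sB) T0; exists u => //.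
have split_T : (s |: X) :\: T = X :\: B :|: (s |: B) :\: T.
  apply/setP => x; rewrite !inE; have := subsetP sT x.
  by case: (x == s); case: (x \in B); case: (x \in T) => // /(_ isT).
have dT : [disjoint X :\: B & (s |: B) :\: T].
  rewrite disjoints_subset; apply/subsetP => x; rewrite !inE.
  by case: (x == s); case: (x \in B); rewrite ?andbF.
move: hu; rewrite split_T deg_setU //; lia.
Qed.

Lemma admissible_setD (B : {set V}) v :
  B \subset X -> B != set0 -> v \in X -> v \notin B -> admissible_pair s (X :\: B) B.
Proof.
move=> sB B0 vX vB; split; first by apply/set0Pn; exists v; rewrite inE vB.
split=> //; split; first by rewrite disjoints_subset setDE subsetIr.
by rewrite setUC -{1}(setIidPr sB) setID.
Qed.

Section MaxOverloaded.
Variables (p : V -> int) (v : V).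

Definition avoiding_overloaded (S : {set V}) : bool :=
  [&& S \subset X, v \notin S & overloaded p S].

Definition max_overloaded : {set V} := \bigcup_(S | avoiding_overloaded S) S.
Local Notation M := max_overloaded.

Lemma avoiding_overloaded_max : avoiding_overloaded M.
Proof.
rewrite /max_overloaded; apply: (big_ind avoiding_overloaded) => //.
  by rewrite /avoiding_overloaded sub0set inE; apply/forall_inP => u; rewrite inE.
move=> S T /and3P[sS vS ovS] /and3P[sT vT ovT].
by rewrite /avoiding_overloaded subUset sS sT inE negb_or vS vT overloaded_setU.
Qed.

Lemma sub_max_overloaded (S : {set V}) : avoiding_overloaded S -> S \subset M.
Proof. exact: bigcup_sup. Qed.

Lemma PF_on_setD_max : PF p -> v \in VM p -> PF_on (X :\: M) p.
Proof.
move=> [p_gt0 _]; rewrite inE => /andP[_ pv_le].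
have /and3P[sM vM ovM] := avoiding_overloaded_max.
split=> [u /setDP[uX _] | T sT T0]; first exact: p_gt0.
have sTX : T \subset X := subset_trans sT (subsetDl _ _).
have [vT | vT] := boolP (v \in T).
  exists v => //; apply: le_trans pv_le _; rewrite lez_nat -deg_set1 deg_subset //.
  by rewrite sub1set !inE eqxx (negPf (notin_setC1 sTX)).
have [/exists_inP[u uT hu] | /exists_inPn noT] :=
  boolP [exists u in T, p u <= (deg ((s |: X :\: M) :\: T) u)%:Z]; first by exists u.
have : avoiding_overloaded (M :|: T).
  rewrite /avoiding_overloaded subUset sM sTX inE negb_or vM vT.
  apply: overloadedU ovM _ => u uT; rewrite ltNge.
  apply: contra (noT u uT) => /le_trans; apply; rewrite lez_nat deg_subset //.
  by apply/subsetP => x; rewrite !inE; case: (x \in M); case: (x \in T); case: (x == s).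
move=> /sub_max_overloaded; rewrite subUset => /andP[_ sTM].
case/set0Pn: T0 => t tT; have := subsetP sT t tT.
by rewrite inE (subsetP sTM t tT).
Qed.

End MaxOverloaded.

Lemma avoiding_overloaded_pplus p v (S : {set V}) : v \in VM p -> S \subset X ->
  {in S, forall u, (deg (~: S) u)%:Z < pplus p v u} -> avoiding_overloaded p v S.
Proof.
rewrite inE => /andP[_ pv_le] sS ltS; have sS_s := notin_setC1 sS.
have vS : v \notin S.
  apply/negP => vS; have := ltS v vS; rewrite /pplus eqxx /= deg_setC // ltNge.
  by rewrite (le_trans pv_le) // lez_nat leq_addr.
rewrite /avoiding_overloaded sS vS; apply/forall_inP => u uS; have := ltS u uS.
have uv : u != v by apply: contraNneq vS => <-.
have us : u != s by apply: contraNneq sS_s => <-.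
rewrite /pplus uv us deg_setC //=; lia.
Qed.

Lemma PF_pplus p v : PF p ->
  (forall A B, admissible_pair s A B -> ~ decomposable mult s p A B) ->
  v \in VM p -> PF (pplus p v).
Proof.
move=> Hp Hprime vVM; have [p_gt0 _] := Hp; have := vVM; rewrite inE => /andP[vX _].
split=> [u uX | S sS S0].
  apply: lt_le_trans (p_gt0 u uX) _; rewrite /pplus; case: ifP => // _; lia.
rewrite setU1_setC1 setTD.
have [/exists_inP[u uS hu] | /exists_inPn noS] :=
  boolP [exists u in S, pplus p v u <= (deg (~: S) u)%:Z]; first by exists u.
have ovS : avoiding_overloaded p v S.
  by apply: avoiding_overloaded_pplus => // u uS; rewrite ltNge noS.
have /and3P[sMX vM ovM] := avoiding_overloaded_max p v.
case: (Hprime (X :\: max_overloaded p v) (max_overloaded p v)).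
  apply: (admissible_setD sMX _ vX vM); apply: contraNneq S0 => M0.
  by rewrite -subset0 -M0 sub_max_overloaded.
by split; [exact: PF_on_setD_max | exact: PF_on_overloaded].
Qed.

Lemma PF_on_VM (A : {set V}) q : A \subset X -> A != set0 -> PF_on A q ->
  exists2 v, v \in A & v \in VM q.
Proof.
move=> sA A0 [_ PFA]; have [v vA hv] := PFA A (subxx A) A0.
exists v; rewrite // inE (subsetP sA v vA); apply: le_trans hv _.
rewrite lez_nat -deg_set1 deg_subset //.
by apply/subsetP => x; rewrite !inE; case: (x == s); case: (x \in A).
Qed.

Lemma not_PF_pplus p (A B : {set V}) v : admissible_pair s A B ->
  PF_on B (fun u => p u - (deg A u)%:Z) -> v \in A -> ~ PF (pplus p v).
Proof.
move=> [_ [B0 [dAB UAB]]] [B_gt0 _] vA [_ PFv].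
have sB : B \subset X by rewrite -UAB subsetUr.
have XB : X :\: B = A by rewrite -UAB setDUl setDv setU0; apply/setDidPl.
have [u uB] := PFv B sB B0.
have uv : u != v by apply: contraTneq uB => ->; rewrite (disjointFr dAB vA).
have us : u != s by apply: contraNneq (notin_setC1 sB) => <-.
rewrite setU1_setC1 setTD deg_setC ?notin_setC1 // XB /pplus uv us /=.
by have := B_gt0 u uB; lia.
Qed.

End Parking.

Theorem corollary2p12 (V : finType) (mult : V -> V -> nat) (s : V) (p : V -> int)
  (Hsym : forall v w, mult v w = mult w v)
  (Hloop : forall v, mult v v = 0%N)
  (Hconn : connected_graph mult)
  (Hp : PF mult s p) :
  prime_pf mult s p <-> (forall v, v \in VM mult s p -> PF mult s (pplus mult s p v)).
Proof.
split=> [[_ Hprime] v | HVM]; first exact: PF_pplus.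
split=> // A B AB [PFA PFB].
have [A0 [_ [_ UAB]]] := AB.
have sA : A \subset [set~ s] by rewrite -UAB subsetUl.
have [v vA vVM] := PF_on_VM sA A0 PFA.
exact: not_PF_pplus AB PFB vA (HVM v vVM).
Qed.
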